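(* Let $K$ be a finite field of characteristic $p$ and let $d$ be an integer with $\gcd(d,|K|-1)=1$. Let $E$ be the extension of $\mathbb{Q}$ generated by all values $W_{K,d}(a)$, $a\in K^\times$. Let $m$ be the smallest positive divisor of $p-1$ such that $d\equiv 1\pmod{(p-1)/m}$. Then $E$ is the unique subfield of $\mathbb{Q}(\zeta_p)$ with $[E:\mathbb{Q}]=m$.
   Context: $\zeta_p$ is a primitive $p$th root of unity over $\mathbb{Q}$. $\psi_K(x)=\exp(2\pi i\,\mathrm{Tr}_{K/\mathbb{F}_p}(x)/p)$ and $W_{K,d}(a)=\sum_{x\in K}\psi_K(x^d+ax)$. *)

From HB Require Import structures.
From mathcomp Require Import all_boot all_order all_algebra all_field.
Set Implicit Arguments. Unset Strict Implicit. Unset Printing Implicit Defensive.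
Import GRing.Theory.
Local Open Scope ring_scope.

(* Absolute trace Tr_{K/F_p}(x) = sum_{i < n} x^(p^i), where n = [K:F_p]. *)
Definition absTrace (K : finFieldType) (p : nat) (x : K) : K :=
  \sum_(i < logn p #|K|) x ^+ (p ^ i).

(* The representative t in {0,..,p-1} of an element of the prime field F_p
   (seen inside K), i.e. t%:R = y; defaults to 0 if y is not in F_p. *)
Definition Fp_rep (K : finFieldType) (p : nat) (y : K) : nat :=
  if [pick t : 'I_p | t%:R == y] is Some t then val t else 0%N.

Definition psiK (K : finFieldType) (p : nat) (L : fieldType) (zeta : L) (x : K) : L :=
  zeta ^+ Fp_rep p (absTrace p x).

Definition WKd (K : finFieldType) (p d : nat) (L : fieldType) (zeta : L) (a : K) : L :=
  \sum_(x : K) psiK p zeta (x ^+ d + a * x).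

Definition Wvalues (K : finFieldType) (p d : nat) (L : fieldType) (zeta : L) : seq L :=
  [seq WKd p d zeta a | a <- enum K & a != 0].

From HB Require Import structures.
From mathcomp Require Import all_boot all_order all_algebra all_fingroup all_solvable all_field.
Import GRing.Theory Num.Theory.
Local Open Scope ring_scope.
Set Implicit Arguments. Unset Strict Implicit. Unset Printing Implicit Defensive.

(* The Galois group of Q(zeta_p)/Q is cyclic of order p - 1, its element
   sigma_c sending zeta to zeta^c, and sigma_c maps W(a) to
   sum_x psi(c (x^d + a x)).  Substituting x -> x / c shows that sigma_c
   fixes every W(a) when c^d = c; conversely, Fourier inversion over the
   additive characters of K recovers psi(c x^d) from these sums, so
   sigma_c fixing every W(a) forces psi(c u) = psi(c^d u) for all u, i.e.
   c^d = c.  Hence Gal(Q(zeta_p)/E) = {sigma : sigma^(d-1) = 1}, a subgroup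
   of order gcd(d - 1, p - 1) = (p - 1) / m, so [E : Q] = m, and E is the
   only subfield of that degree because the Galois group is cyclic. *)

Lemma natr_eq_pchar_mod (R : nzRingType) (p : nat) (a b : nat) :
  p \in [pchar R] -> (a%:R == b%:R :> R) = (a == b %[mod p]).
Proof.
move=> pcharRp; wlog le_ab : a b / (a <= b)%N.
  by move=> IH; case: (leqP a b) => [/IH // | /ltnW/IH]; rewrite eq_sym => ->.
by rewrite [in RHS]eq_sym eqn_mod_dvd // (dvdn_pcharf pcharRp) natrB // subr_eq0.
Qed.

Lemma divn_divK (n a : nat) : (0 < n)%N -> (a %| n)%N -> (n %/ (n %/ a))%N = a.
Proof. by move=> n_gt0 a_dvd_n; rewrite divnA // mulKn. Qed.

Lemma least_cong1_divisorE (n d m : nat) :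
  (0 < n)%N -> (0 < d)%N -> (m %| n)%N -> d = 1 %[mod n %/ m] ->
  (forall m', (0 < m')%N -> (m' %| n)%N -> d = 1 %[mod n %/ m'] -> (m <= m')%N) ->
  (n %/ gcdn d.-1 n)%N = m.
Proof.
move=> n_gt0 d_gt0 m_dvd_n m_cong m_min; set e := gcdn d.-1 n.
have e_dvd_n : (e %| n)%N := dvdn_gcdr _ _.
have cong1E k : (d == 1 %[mod k]) = (k %| d.-1)%N by rewrite eqn_mod_dvd // subn1.
have m_gt0 : (0 < m)%N by apply: dvdn_gt0 m_dvd_n.
have e_gt0 : (0 < e)%N by rewrite gcdn_gt0 n_gt0 orbT.
apply/eqP; rewrite eqn_leq; apply/andP; split.
  have nm_dvd_e : (n %/ m %| e)%N by rewrite dvdn_gcd -cong1E m_cong eqxx dvdn_div.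
  rewrite -[leqRHS](divn_divK n_gt0 m_dvd_n) leq_div2l //.
    by rewrite divn_gt0 // dvdn_leq.
  exact: dvdn_leq nm_dvd_e.
apply: m_min; last by apply/eqP; rewrite divn_divK // cong1E dvdn_gcdl.
  by rewrite divn_gt0 // dvdn_leq.
exact: dvdn_div.
Qed.

Section CyclicGroup.
Local Open Scope group_scope.
Variable gT : finGroupType.
Implicit Types G : {group gT}.

Lemma card_Ldiv_cyclic G e : cyclic G -> (e %| #|G|)%N -> #|'Ldiv_e(G)| = e.
Proof.
case/cyclicP=> s -> e_dvd; rewrite -/#[s] in e_dvd *.
have s_gt0 : (0 < #[s])%N := order_gt0 s.
have e_gt0 : (0 < e)%N := dvdn_gt0 s_gt0 e_dvd.
set k := (#[s] %/ e)%N; have sE : #[s] = (k * e)%N by rewrite divnK.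
suff -> : 'Ldiv_e(<[s]>) = <[s ^+ k]> by rewrite -/#[_] orderXdiv ?divn_divK ?dvdn_div.
apply/setP => x; apply/LdivP/idP => [[/cycleP[i ->]] | ].
  move/eqP; rewrite -expgM -order_dvdn sE dvdn_pmul2r // => /dvdnP[j ->].
  by rewrite mulnC expgM mem_cycle.
case/cycleP=> j ->; split; first by rewrite -expgM mem_cycle.
by rewrite -!expgM mulnCA -sE mulnC expgM expg_order expg1n.
Qed.

Lemma expg_eq_self_Ldiv G x d : x \in G -> (0 < d)%N ->
  (x ^+ d == x) = (x \in 'Ldiv_(gcdn d.-1 #|G|)(G)).
Proof.
move=> Gx d_gt0; have -> : x ^+ d = x ^+ d.-1 * x by rewrite -expgSr prednK.
rewrite -[X in _ == X]mul1g (inj_eq (mulIg x)) -order_dvdn.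
apply/idP/LdivP => [x_dvd | [_ /eqP]]; last by rewrite -order_dvdn dvdn_gcd => /andP[].
by split => //; apply/eqP; rewrite -order_dvdn dvdn_gcd x_dvd order_dvdG.
Qed.

End CyclicGroup.

Section GaloisCyclic.
Variables (F0 : fieldType) (S : splittingFieldType F0).

Lemma mem_Gal1 (x : gal_of {:S}) : x \in 'Gal({:S} / 1)%g.
Proof.
rewrite gal_kHom ?sub1v //; apply/kHom_monoid_morphism.
by split; [exact: rmorph1 | exact: rmorphM].
Qed.

Hypothesis galS1 : galois 1 {:S}.

Lemma galoisS1 (E : {subfield S}) : galois E {:S}.
Proof. by apply: (@galoisS _ _ 1%AS _ _ _ galS1); rewrite sub1v subvf. Qed.

Lemma dim_subfield_Gal (E : {subfield S}) :
  \dim E = (\dim {:S} %/ #|'Gal({:S} / E)%g|)%N.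
Proof.
by rewrite -(galois_dim (galoisS1 E)) divn_divK ?adim_gt0 ?field_dimS ?subvf.
Qed.

Lemma cyclic_Gal_subfield_eq (E F : {subfield S}) :
  cyclic 'Gal({:S} / 1)%g -> \dim E = \dim F -> E = F.
Proof.
move=> cycG dimEF.
have cardEF : #|'Gal({:S} / E)%g| = #|'Gal({:S} / F)%g|.
  by rewrite -(galois_dim (galoisS1 E)) -(galois_dim (galoisS1 F)) dimEF.
have GalEF : 'Gal({:S} / E)%g = 'Gal({:S} / F)%g.
  by apply/eqP; rewrite (eq_subG_cyclic cycG) ?cardEF ?galS ?sub1v.
have /galois_fixedField fixE := galoisS1 E.
have /galois_fixedField fixF := galoisS1 F.
by apply: val_inj; rewrite /= -fixE -fixF GalEF.
Qed.

End GaloisCyclic.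

Lemma prim_root_neq1 (R : idomainType) n (z : R) :
  (1 < n)%N -> n.-primitive_root z -> z != 1.
Proof.
move=> n_gt1 prim_z; rewrite -{1}(expr1 z) -(expr0 z) (eq_prim_root_expr prim_z).
by rewrite mod0n modn_small.
Qed.

Lemma prime_root_prim (R : idomainType) p (w : R) :
  prime p -> w ^+ p = 1 -> w != 1 -> p.-primitive_root w.
Proof.
move=> p_pr wp1 w_neq1; have [k prim_k k_dvd] := prim_order_exists (prime_gt0 p_pr) wp1.
case/primeP: p_pr => _ /(_ k k_dvd) /orP[/eqP k1 | /eqP <- //].
by move: prim_k w_neq1; rewrite k1 => /prim_expr_order; rewrite expr1 => ->; rewrite eqxx.
Qed.

Lemma size_ones (R : nzRingType) n : size (\poly_(i < n) 1 : {poly R}) = n.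
Proof.
by case: n => [|n]; [rewrite poly_def big_ord0 size_poly0 | rewrite size_poly_eq ?oner_eq0].
Qed.

Lemma horner_ones (R : comNzRingType) n (x : R) :
  (\poly_(i < n) 1).[x] = \sum_(i < n) x ^+ i.
Proof. by rewrite horner_poly; under eq_bigr do rewrite mul1r. Qed.

Lemma map_poly_ones (R R' : nzRingType) (f : {rmorphism R -> R'}) n :
  map_poly f (\poly_(i < n) 1) = \poly_(i < n) 1.
Proof.
apply/polyP => i; rewrite coef_map !coef_poly.
by case: ifP => _; [exact: rmorph1 | exact: rmorph0].
Qed.

Lemma root_ones_prim (R : idomainType) p (z : R) :
  (1 < p)%N -> p.-primitive_root z -> root (\poly_(i < p) 1) z.
Proof.
move=> p_gt1 prim_z; rewrite /root horner_ones.
have := subrX1 z p; rewrite prim_expr_order // subrr => /esym/eqP.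
by rewrite mulf_eq0 subr_eq0 (negbTE (prim_root_neq1 p_gt1 prim_z)).
Qed.

Lemma prim_root_ones (R : idomainType) p (w : R) :
  prime p -> p%:R != 0 :> R -> root (\poly_(i < p) 1) w -> p.-primitive_root w.
Proof.
move=> p_pr p_neq0; rewrite /root horner_ones => /eqP sum0.
apply: prime_root_prim => //; first by apply/eqP; rewrite -subr_eq0 subrX1 sum0 mulr0.
apply: contra_neq p_neq0 => w1; rewrite -sum0 w1.
by under eq_bigr do rewrite expr1n; rewrite sumr_const card_ord.
Qed.

Lemma fieldExt_rat_natr_eq0 (L : fieldExtType rat) n : (n%:R == 0 :> L) = (n == 0)%N.
Proof. by rewrite -(rmorph_nat (in_alg L)) fmorph_eq0 pnatr_eq0. Qed.

(* Irreducibility of 1 + X + ... + X^(p-1) over Q: a root in algC of such a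
   divisor is a primitive p-th root of unity, whose minimal polynomial over Q
   is the cyclotomic polynomial, of degree p - 1. *)
Lemma size_dvd_ones_prime p (q : {poly rat}) :
  prime p -> q %| \poly_(i < p) 1 -> size q != 1 -> size q = p.
Proof.
move=> p_pr q_dvd q_size; have p_gt0 := prime_gt0 p_pr.
have ones_neq0 : \poly_(i < p) 1 != 0 :> {poly rat} by rewrite -size_poly_eq0 size_ones -lt0n.
have q_neq0 : q != 0 by apply: contraTneq q_dvd => ->; rewrite dvd0p.
have [w qw] : exists w, root (map_poly (ratr : rat -> algC) q) w.
  by apply/closed_rootP; rewrite size_map_poly.
have w_prim : p.-primitive_root w.
  apply: prim_root_ones => //; first by rewrite pnatr_eq0 -lt0n.
  by rewrite -(map_poly_ones ratr) (root_dvdp _ qw) ?dvdp_map.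
have [qw_min [Dqw_min _] min_dvd] := minCpolyP w.
have sz_qw_min : size qw_min = p.
  have := size_cyclotomic w p; rewrite -(minCpoly_cyclotomic w_prim) Dqw_min.
  by rewrite size_map_poly totient_prime // prednK.
apply/eqP; rewrite eqn_leq; apply/andP; split.
  by rewrite -[leqRHS](size_ones rat p) dvdp_leq.
by rewrite -[leqLHS]sz_qw_min dvdp_leq // -min_dvd.
Qed.

Section Cyclotomic.
Variables (L : fieldExtType rat) (p : nat) (zeta : L).
Hypotheses (p_pr : prime p) (zeta_prim : p.-primitive_root zeta).
Hypothesis L_gen : <<1; zeta>>%VS = fullv.

Lemma splittingFieldFor_cyclotomic : splittingFieldFor 1 ('X^p - 1) {:L}.
Proof.
exists [seq zeta ^+ i | i <- index_iota 0 p].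
  by rewrite big_map factor_Xn_sub_1 // eqpxx.
apply/eqP; rewrite eqEsubv subvf /= -[X in (X <= _)%VS]L_gen.
apply/FadjoinP; split; first exact: subv_adjoin_seq.
apply: seqv_sub_adjoin; apply/mapP; exists 1%N; last by rewrite expr1.
by rewrite mem_index_iota prime_gt1.
Qed.

Lemma cyclotomic_splitting : SplittingField.axiom L.
Proof.
exists ('X^p - 1); last exact: splittingFieldFor_cyclotomic.
by rewrite rpredB ?rpredX ?polyOverX ?rpred1.
Qed.

Lemma dim_cyclotomic : \dim {:L} = p.-1.
Proof.
have /polyOver1P[q Dq] := minPolyOver 1 zeta.
have q_dvd : q %| \poly_(i < p) 1.
  rewrite -(dvdp_map (in_alg L)) -Dq map_poly_ones; apply: minPoly_dvdp.
    by apply/polyOver1P; exists (\poly_(i < p) 1); rewrite map_poly_ones.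
  exact: root_ones_prim (prime_gt1 p_pr) zeta_prim.
have q_size : size q != 1.
  rewrite -(size_map_poly (in_alg L)) -Dq gtn_eqF //.
  exact: root_size_gt1 (monic_neq0 (monic_minPoly 1 zeta)) (root_minPoly 1 zeta).
have := adjoin_degreeE 1 zeta; rewrite dimv1 divn1 L_gen => <-.
have := size_minPoly 1 zeta; rewrite Dq size_map_poly.
by rewrite (size_dvd_ones_prime p_pr q_dvd q_size) => ->.
Qed.

End Cyclotomic.

Section CyclotomicGalois.
Variables (S : splittingFieldType rat) (p : nat) (zeta : S).
Hypotheses (p_pr : prime p) (zeta_prim : p.-primitive_root zeta).
Hypothesis S_gen : <<1; zeta>>%VS = fullv.
Implicit Types s t : gal_of {:S}.

Lemma galois_cyclotomic : galois 1 {:S}.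
Proof.
apply/splitting_galoisField; exists ('X^p - 1); split.
- by rewrite rpredB ?rpredX ?polyOverX ?rpred1.
- by apply: separable_Xn_sub_1; rewrite fieldExt_rat_natr_eq0 -lt0n prime_gt0.
- exact: splittingFieldFor_cyclotomic p_pr zeta_prim S_gen.
Qed.

Definition gal_exp s : nat :=
  if [pick i : 'I_p | s zeta == zeta ^+ i] is Some i then val i else 0.

Lemma gal_expE s : s zeta = zeta ^+ gal_exp s.
Proof.
rewrite /gal_exp; case: pickP => [i /eqP // | no_exp].
have : s zeta ^+ p = 1 by rewrite -rmorphXn prim_expr_order // rmorph1.
by case/(prim_rootP zeta_prim) => i Di; have := no_exp i; rewrite Di eqxx.
Qed.

Lemma eq_gal_zeta s t a b : s zeta = zeta ^+ a -> t zeta = zeta ^+ b ->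
  (s == t) = (a == b %[mod p]).
Proof.
move=> sa tb; rewrite -(eq_prim_root_expr zeta_prim) -sa -tb.
apply/eqP/eqP => [-> // | st_zeta]; apply/eqP/gal_eqP => x _.
have : x \in <<1; zeta>>%VS by rewrite S_gen memvf.
case/Fadjoin_polyP => q q1 ->; rewrite -!horner_map /= st_zeta.
by rewrite !(fixedPoly_gal (sub1v _) (mem_Gal1 _) q1).
Qed.

Lemma gal_zeta_exp_mod_neq0 s c : s zeta = zeta ^+ c -> (c == 0 %[mod p]) = false.
Proof.
move=> sc; apply/negP => /eqP c0.
have : s zeta = s 1 by rewrite sc rmorph1 -(prim_expr_mod zeta_prim) c0 mod0n expr0.
by move/fmorph_inj/eqP; rewrite (negbTE (prim_root_neq1 (prime_gt1 p_pr) zeta_prim)).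
Qed.

Lemma galM_zeta s t a b : s zeta = zeta ^+ a -> t zeta = zeta ^+ b ->
  (s * t)%g zeta = zeta ^+ (a * b).
Proof.
move=> sa tb; rewrite galM ?memvf // sa.
have -> : t (zeta ^+ a) = t zeta ^+ a by rewrite rmorphXn.
by rewrite tb -exprM mulnC.
Qed.

Lemma galX_zeta s a j : s zeta = zeta ^+ a -> (s ^+ j)%g zeta = zeta ^+ (a ^ j).
Proof.
move=> sa; elim: j => [|j IH]; first by rewrite expg0 gal_id expn0 expr1.
by rewrite expgSr expnSr (galM_zeta IH sa).
Qed.

Lemma cyclic_Gal_cyclotomic : cyclic 'Gal({:S} / 1)%g.
Proof.
have pcharFp := pchar_Fp p_pr.
apply: (@field_mul_group_cyclic _ _ _ (fun s => (gal_exp s)%:R : 'F_p)) => [s t _ _ | s _].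
  apply/eqP; rewrite -natrM (natr_eq_pchar_mod _ _ pcharFp).
  by rewrite -(eq_gal_zeta (gal_expE _) (galM_zeta (gal_expE s) (gal_expE t))).
have one_zeta : (1%g : gal_of {:S}) zeta = zeta ^+ 1 by rewrite gal_id expr1.
rewrite -[1 : 'F_p]/(1%:R); split => [/eqP | ->].
  by rewrite (natr_eq_pchar_mod _ _ pcharFp) -(eq_gal_zeta (gal_expE s) one_zeta) => /eqP.
by apply/eqP; rewrite (natr_eq_pchar_mod _ _ pcharFp) -(eq_gal_zeta (gal_expE 1%g) one_zeta).
Qed.

Lemma card_Gal_cyclotomic : #|'Gal({:S} / 1)%g| = p.-1.
Proof.
by rewrite -galois_dim ?galois_cyclotomic // dimv1 divn1 (dim_cyclotomic p_pr zeta_prim).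
Qed.

End CyclotomicGalois.

Section AbsoluteTrace.
Variables (K : finFieldType) (p : nat).
Hypothesis pcharKp : p \in [pchar K].
Let p_pr : prime p := pcharf_prime pcharKp.
Local Notation Tr := (@absTrace K p).
Local Notation n := (logn p #|K|).

Lemma card_pchar_field : #|K| = (p ^ n)%N.
Proof. exact: card_pprimeChar pcharKp. Qed.

Lemma logn_card_pchar_gt0 : (0 < n)%N.
Proof. by rewrite -(ltn_exp2l _ _ (prime_gt1 p_pr)) -card_pchar_field expn0 finNzRing_gt1. Qed.

Lemma absTraceD x y : Tr (x + y) = Tr x + Tr y.
Proof.
rewrite /absTrace -big_split; apply: eq_bigr => i _.
by apply: exprDn_pchar; rewrite pnatX (pnatE _ p_pr) pcharKp.
Qed.

Lemma absTrace0 : Tr 0 = 0.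
Proof. by rewrite /absTrace big1 // => i _; rewrite expr0n expn_eq0 eqn0Ngt prime_gt0. Qed.

Lemma absTraceMn x c : Tr (x *+ c) = Tr x *+ c.
Proof. by elim: c => [|c IH]; rewrite ?mulr0n ?absTrace0 // !mulrS absTraceD IH. Qed.

Lemma absTrace_frobenius x : Tr x ^+ p = Tr x.
Proof.
rewrite /absTrace -(pFrobenius_autE pcharKp) rmorph_sum /=.
under eq_bigr do rewrite pFrobenius_autE -exprM -expnSr.
rewrite -(prednK logn_card_pchar_gt0) [in LHS]big_ord_recr [in RHS]big_ord_recl /=.
by rewrite prednK ?logn_card_pchar_gt0 // -card_pchar_field expf_card expn0 expr1 addrC.
Qed.

(* Tr is evaluation of sum_i X^(p^i), a nonzero polynomial of degree p^(n-1) < #|K|. *)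
Lemma absTrace_neq0 : exists x, Tr x != 0.
Proof.
have [x Trx | Tr0] := pickP (fun x => Tr x != 0); first by exists x.
have n_gt0 := logn_card_pchar_gt0.
pose T : {poly K} := \sum_(i < n) 'X^(p ^ i).
have T_neq0 : T != 0.
  apply: contra_neq (oner_neq0 K) => T0; have := congr1 (coefp 1) T0.
  rewrite /= coef0 coef_sum -(prednK n_gt0) big_ord_recl /= expn0 coefXn eqxx.
  rewrite big1 ?addr0 // => i _; rewrite coefXn eq_sym gtn_eqF //.
  by rewrite -{1}(expn0 p) ltn_exp2l ?prime_gt1.
have rootT : all (root T) (enum K).
  apply/allP => x _; rewrite rootE horner_sum; apply/eqP.
  by rewrite -[RHS](eqP (negbFE (Tr0 x))); apply: eq_bigr => i _; rewrite hornerXn.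
have := max_poly_roots T_neq0 rootT (enum_uniq _).
rewrite -cardE card_pchar_field -(prednK n_gt0) expnS ltnNge => /negP[].
apply: leq_trans (size_sum _ _ _) _; apply/bigmax_leqP => i _.
rewrite size_polyXn (@leq_ltn_trans (p ^ n.-1)) //.
  by rewrite leq_pexp2l ?prime_gt0 // -ltnS prednK.
by rewrite ltn_Pmull ?prime_gt1 ?expn_gt0 ?prime_gt0.
Qed.

Lemma frobenius_fixed_natr (y : K) : y ^+ p = y -> exists t : 'I_p, t%:R = y.
Proof.
move=> yp; have [t /eqP yt | no_t] := pickP (fun t : 'I_p => t%:R == y); first by exists t.
pose rs := y :: [seq (val t)%:R | t <- enum 'I_p].
have sz : size ('X^p - 'X : {poly K}) = p.+1.
  by rewrite size_polyDl ?size_polyXn // size_polyN size_polyX ltnS prime_gt1.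
have XpX_neq0 : ('X^p - 'X : {poly K}) != 0 by rewrite -size_poly_eq0 sz.
have rs_roots : all (root ('X^p - 'X)) rs.
  rewrite /= rootE !hornerE yp subrr eqxx /=; apply/allP => _ /mapP[t _ ->].
  by rewrite rootE !hornerE -(pFrobenius_autE pcharKp) pFrobenius_aut_nat subrr.
have rs_uniq : uniq rs.
  rewrite /= map_inj_uniq ?enum_uniq ?andbT.
    by apply/mapP => -[t _ yt]; have := no_t t; rewrite yt eqxx.
  move=> t s ts; apply/val_inj/eqP; move/eqP: ts.
  by rewrite (natr_eq_pchar_mod _ _ pcharKp) !modn_small.
by have := max_poly_roots XpX_neq0 rs_roots rs_uniq; rewrite /= size_map size_enum_ord sz ltnn.
Qed.

Lemma Fp_rep_absTrace x : (Fp_rep p (Tr x))%:R = Tr x.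
Proof.
rewrite /Fp_rep; case: pickP => [t /eqP // | no_t].
have [t tTr] := frobenius_fixed_natr (absTrace_frobenius x).
by have := no_t t; rewrite tTr eqxx.
Qed.

End AbsoluteTrace.

Section AdditiveCharacter.
Variables (K : finFieldType) (p : nat) (L : fieldType) (zeta : L).
Hypotheses (pcharKp : p \in [pchar K]) (zeta_prim : p.-primitive_root zeta).
Local Notation Tr := (@absTrace K p).
Local Notation psi := (@psiK K p L zeta).

Lemma psiK_natr x (t : nat) : t%:R = Tr x -> psi x = zeta ^+ t.
Proof.
move=> tTr; apply/eqP; rewrite /psiK (eq_prim_root_expr zeta_prim).
by rewrite -(natr_eq_pchar_mod _ _ pcharKp) (Fp_rep_absTrace pcharKp) tTr.
Qed.

Lemma psiKD x y : psi (x + y) = psi x * psi y.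
Proof.
rewrite (@psiK_natr _ (Fp_rep p (Tr x) + Fp_rep p (Tr y))) ?exprD //.
by rewrite natrD !(Fp_rep_absTrace pcharKp) absTraceD.
Qed.

Lemma psiK0 : psi 0 = 1.
Proof. by rewrite (@psiK_natr _ 0) ?absTrace0. Qed.

Lemma psiKN x : psi (- x) * psi x = 1.
Proof. by rewrite -psiKD addNr psiK0. Qed.

Lemma psiKMn x c : psi (x *+ c) = psi x ^+ c.
Proof.
rewrite (@psiK_natr _ (Fp_rep p (Tr x) * c)) ?exprM //.
by rewrite natrM (Fp_rep_absTrace pcharKp) mulr_natr absTraceMn.
Qed.

Lemma psiK_nontrivial : exists x, psi x != 1.
Proof.
have [x Trx] := absTrace_neq0 pcharKp; exists x; apply: contra Trx.
rewrite /psiK -[X in _ == X](expr0 zeta) (eq_prim_root_expr zeta_prim).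
by rewrite -(natr_eq_pchar_mod _ _ pcharKp) (Fp_rep_absTrace pcharKp).
Qed.

Lemma sum_psiK_mul u : \sum_(b : K) psi (b * u) = if u == 0 then #|K|%:R else 0.
Proof.
have [-> | u_neq0] := eqVneq u 0.
  by under eq_bigr do rewrite mulr0 psiK0; rewrite sumr_const.
have [x psix] := psiK_nontrivial; set S := \sum_b _.
have : S = S * psi x.
  rewrite {1}/S (reindex_inj (addIr (x / u))) mulr_suml; apply: eq_bigr => b _.
  by rewrite mulrDl divfK // psiKD.
move/eqP; rewrite -subr_eq0 -{1}[S]mulr1 -mulrBr mulf_eq0 subr_eq0 [_ == psi _]eq_sym.
by rewrite (negbTE psix) orbF => /eqP.
Qed.

Lemma psiK_dilation_inj (g h : K) : (forall u, psi (g * u) = psi (h * u)) -> g = h.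
Proof.
move=> psi_gh; apply/eqP; rewrite -subr_eq0; apply/negPn/negP => gh_neq0.
have [x /eqP[]] := psiK_nontrivial; set u := x / (g - h).
have -> : x = g * u - h * u by rewrite -mulrBl mulrC divfK.
by rewrite psiKD psi_gh mulrC psiKN.
Qed.

Lemma sum_psiK_inversion (f h : K -> K) x0 : injective h ->
  \sum_(a : K) (\sum_(x : K) psi (f x + a * h x)) * psi (- (a * h x0))
  = #|K|%:R * psi (f x0).
Proof.
move=> h_inj.
have -> : \sum_(a : K) (\sum_(x : K) psi (f x + a * h x)) * psi (- (a * h x0)) =
          \sum_(x : K) psi (f x) * \sum_(a : K) psi (a * (h x - h x0)).
  under eq_bigr do rewrite mulr_suml.
  rewrite exchange_big /=; apply: eq_bigr => x _; rewrite mulr_sumr.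
  by apply: eq_bigr => a _; rewrite -!psiKD mulrBr addrA.
rewrite (bigD1 x0) //= sum_psiK_mul subrr eqxx big1 ?addr0 1?mulrC // => x x_neq.
by rewrite sum_psiK_mul subr_eq0 (inj_eq h_inj) (negbTE x_neq) mulr0.
Qed.

Lemma rmorph_psiK (f : {rmorphism L -> L}) (c : nat) x :
  f zeta = zeta ^+ c -> f (psi x) = psi (x *+ c).
Proof. by move=> f_zeta; rewrite psiKMn /psiK rmorphXn f_zeta -!exprM mulnC. Qed.

End AdditiveCharacter.

Section WeilSums.
Variables (K : finFieldType) (p : nat) (L : fieldType) (zeta : L) (d : nat).
Hypotheses (pcharKp : p \in [pchar K]) (zeta_prim : p.-primitive_root zeta).
Hypotheses (d_coprime : coprime d #|K|.-1) (d_gt0 : (0 < d)%N).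
Hypothesis card_K_neq0 : #|K|%:R != 0 :> L.
Local Notation psi := (@psiK K p L zeta).
Local Notation W := (@WKd K p d L zeta).

Lemma expd_bij : bijective (fun x : K => x ^+ d).
Proof.
have [u v uv_gcd _] := egcdnP #|K|.-1 d_gt0.
have expK (x : K) : x ^+ (u * d) = x.
  rewrite uv_gcd (eqP d_coprime); have [-> | x_neq0] := eqVneq x 0.
    by rewrite expr0n addn1.
  have xq1 : x ^+ #|K|.-1 = 1.
    apply: (mulfI x_neq0); rewrite mulr1 -exprS prednK ?expf_card //.
    exact: ltnW (finNzRing_gt1 K).
  by rewrite exprD expr1 mulnC exprM xq1 expr1n mul1r.
by exists (fun x => x ^+ u) => x /=; rewrite -exprM; [rewrite mulnC expK | rewrite expK].
Qed.

Lemma sum_expd (F : K -> L) : \sum_(x : K) F (x ^+ d) = \sum_(x : K) F x.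
Proof. by rewrite [RHS](reindex_inj (bij_inj expd_bij)). Qed.

Lemma WKd_dilate (g a : K) : g != 0 -> g ^+ d = g ->
  \sum_(x : K) psi (g * (x ^+ d + a * x)) = W a.
Proof.
move=> g_neq0 gd; rewrite (reindex_inj (mulIf (invr_neq0 g_neq0))) /=.
apply: eq_bigr => x _; rewrite exprMn exprVn gd (mulrA a x) -mulrDl mulrC divfK //.
Qed.

Lemma WKd_dilate_fixed (g : K) : g != 0 ->
  (forall a, a != 0 -> \sum_(x : K) psi (g * (x ^+ d + a * x)) = W a) -> g ^+ d = g.
Proof.
move=> g_neq0 fixW.
have fixW0 a : \sum_(x : K) psi (g * (x ^+ d + a * x)) = W a.
  have [-> | /fixW //] := eqVneq a 0.
  rewrite /WKd; under eq_bigr do rewrite mul0r addr0 mulrC.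
  under [RHS]eq_bigr do rewrite mul0r addr0 -[_ ^+ d]mulr1.
  rewrite (sum_expd (fun x => psi (x * g))) (sum_expd (fun x => psi (x * 1))).
  by rewrite !(sum_psiK_mul pcharKp zeta_prim) (negbTE g_neq0) oner_eq0.
have psi_gd t : psi (g * t ^+ d) = psi (g ^+ d * t ^+ d).
  apply: (mulfI card_K_neq0); rewrite -exprMn.
  rewrite -(sum_psiK_inversion pcharKp zeta_prim (fun x => g * x ^+ d) t (mulfI g_neq0)).
  rewrite -(sum_psiK_inversion pcharKp zeta_prim (fun x => x ^+ d) (g * t) (@inj_id K)).
  apply: eq_bigr => a _; congr (_ * _); rewrite [RHS](_ : _ = W a) // -fixW0.
  by apply: eq_bigr => x _; rewrite mulrDr mulrCA.
have [r _ rK] := expd_bij.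
by apply/esym/(psiK_dilation_inj pcharKp zeta_prim) => u; rewrite -[u]rK psi_gd.
Qed.

End WeilSums.

Lemma adjoin_seq_sub_fixedField1 (F0 : fieldType) (S : splittingFieldType F0)
    (s : seq S) (x : gal_of {:S}) :
  reflect {in s, forall v, x v = v} (<<1 & s>> <= fixedField [set x])%VS.
Proof.
apply: (iffP idP) => [sub_fix v sv | fix_s].
  have /(subvP sub_fix)/mem_fixedFieldP[_ -> //] : v \in <<1 & s>>%VS := seqv_sub_adjoin _ sv.
  exact: set11.
apply/Fadjoin_seqP; split=> [|v sv]; first exact: sub1v.
by apply/fixedFieldP => [|y /set1P ->]; [exact: memvf | exact: fix_s].
Qed.

Section WeilField.
Variables (K : finFieldType) (p d : nat) (S : splittingFieldType rat) (zeta : S).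
Hypotheses (pcharKp : p \in [pchar K]) (d_coprime : coprime d #|K|.-1) (d_gt0 : (0 < d)%N).
Hypotheses (zeta_prim : p.-primitive_root zeta) (S_gen : <<1; zeta>>%VS = fullv).
Let p_pr : prime p := pcharf_prime pcharKp.
Local Notation psi := (@psiK K p S zeta).
Local Notation W := (@WKd K p d S zeta).
Local Notation E := <<1 & Wvalues K p d zeta>>%AS.

Lemma gal_WKd (x : gal_of {:S}) c a : x zeta = zeta ^+ c ->
  x (W a) = \sum_(y : K) psi (c%:R * (y ^+ d + a * y)).
Proof.
move=> xc; rewrite rmorph_sum; apply: eq_bigr => y _.
by rewrite (rmorph_psiK pcharKp zeta_prim _ xc) mulr_natl.
Qed.

Lemma Wfield_sub_fixedField1 (x : gal_of {:S}) :
  (E <= fixedField [set x])%VS = (x ^+ d == x)%g.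
Proof.
have card_K_neq0 : #|K|%:R != 0 :> S.
  by rewrite fieldExt_rat_natr_eq0 -lt0n ltnW ?finNzRing_gt1.
set c := gal_exp p zeta x; have xc : x zeta = zeta ^+ c := gal_expE zeta_prim x.
have c_neq0 : c%:R != 0 :> K.
  rewrite -(mulr0n 1) (natr_eq_pchar_mod _ _ pcharKp).
  by rewrite (gal_zeta_exp_mod_neq0 p_pr zeta_prim xc).
rewrite (eq_gal_zeta zeta_prim S_gen (galX_zeta d xc) xc).
rewrite -(natr_eq_pchar_mod _ _ pcharKp) natrX.
apply/adjoin_seq_sub_fixedField1/eqP => [fixW | cd v].
  apply: (WKd_dilate_fixed pcharKp zeta_prim d_coprime d_gt0 card_K_neq0 c_neq0) => a a_neq0.
  by rewrite -(gal_WKd a xc) fixW // map_f // mem_filter a_neq0 mem_enum.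
case/mapP=> a; rewrite mem_filter => /andP[a_neq0 _] ->.
by rewrite (gal_WKd a xc) WKd_dilate.
Qed.

Lemma Gal_Wfield : 'Gal({:S} / E)%g = 'Ldiv_(gcdn d.-1 p.-1)('Gal({:S} / 1))%g.
Proof.
apply/setP => x; rewrite -(card_Gal_cyclotomic p_pr zeta_prim S_gen).
rewrite -expg_eq_self_Ldiv ?mem_Gal1 // -Wfield_sub_fixedField1.
by rewrite -sub1set galois_connection ?subvf.
Qed.

Lemma dim_Wfield : \dim E = (p.-1 %/ gcdn d.-1 p.-1)%N.
Proof.
have cycG := cyclic_Gal_cyclotomic p_pr zeta_prim S_gen.
have cardG := card_Gal_cyclotomic p_pr zeta_prim S_gen.
rewrite (dim_subfield_Gal (galois_cyclotomic p_pr zeta_prim S_gen)) Gal_Wfield.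
rewrite card_Ldiv_cyclic // ?(dim_cyclotomic p_pr zeta_prim S_gen) //.
by rewrite [#|_|]cardG dvdn_gcdr.
Qed.

Lemma Wfield_dim_unique : \dim E = (p.-1 %/ gcdn d.-1 p.-1)%N /\
  (forall F : {subfield S}, \dim F = \dim E -> F = E).
Proof.
split; first exact: dim_Wfield.
move=> F; apply: cyclic_Gal_subfield_eq.
  exact: galois_cyclotomic p_pr zeta_prim S_gen.
exact: cyclic_Gal_cyclotomic p_pr zeta_prim S_gen.
Qed.

End WeilField.

Definition cyclotomic_splittingFieldType (L : fieldExtType rat) (p : nat) (zeta : L)
    (p_pr : prime p) (zeta_prim : p.-primitive_root zeta)
    (L_gen : <<1; zeta>>%VS = fullv) : splittingFieldType rat :=
  HB.pack L (FieldExt_isSplittingField.Build rat L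
    (cyclotomic_splitting p_pr zeta_prim L_gen)).

Lemma coprime0_pchar_eq2 (K : finFieldType) (p : nat) :
  p \in [pchar K] -> coprime 0 #|K|.-1 -> p = 2.
Proof.
move=> pcharKp; rewrite /coprime gcd0n => /eqP q1.
have p_pr := pcharf_prime pcharKp.
have cardK : #|K| = 2 by rewrite -(prednK (ltnW (finNzRing_gt1 K))) q1.
apply/eqP; rewrite eqn_leq prime_gt1 // andbT -cardK (card_pchar_field pcharKp).
by rewrite -{1}(expn1 p); apply: leq_pexp2l; [exact: prime_gt0 | exact: logn_card_pchar_gt0].
Qed.

Lemma subfield_dim1_eq (F0 : fieldType) (L : fieldExtType F0) (E F : {subfield L}) :
  \dim {:L} = 1 -> E = F.
Proof.
have subfield1 (K : {subfield L}) : \dim {:L} = 1 -> (K : {vspace L}) = 1%VS.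
  move=> dimL1; apply/eqP; rewrite eq_sym eqEdim sub1v dimv1 -dimL1.
  exact/dimvS/subvf.
by move=> dimL1; apply: val_inj; rewrite /= (subfield1 E dimL1) (subfield1 F dimL1).
Qed.

Unset Implicit Arguments.

Theorem lemma5p3 (K : finFieldType) (p : nat) (hp : p \in [pchar K])
  (d : nat) (hd : coprime d #|K|.-1)
  (m : nat) (m_gt0 : (0 < m)%N) (m_dvd : (m %| p.-1)%N)
  (m_cong : d = 1 %[mod p.-1 %/ m])
  (m_min : forall m' : nat, (0 < m')%N -> (m' %| p.-1)%N ->
             d = 1 %[mod p.-1 %/ m'] -> (m <= m')%N)
  (L : fieldExtType rat) (zeta : L) (hzeta : p.-primitive_root zeta)
  (hL : <<1; zeta>>%VS = fullv) :
  let E : {subfield L} := <<1 & Wvalues K p d zeta>>%AS in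
  \dim E = m /\
  (forall F : {subfield L}, \dim F = m -> F = E).
Proof.
move=> E; have p_pr := pcharf_prime hp.
have dimL := dim_cyclotomic p_pr hzeta hL.
have [d0 | d_gt0] := posnP d.
  move: hd; rewrite d0 => /(coprime0_pchar_eq2 hp) p2.
  have dimL1 : \dim {:L} = 1 by rewrite dimL p2.
  have m1 : m = 1 by apply/eqP; rewrite -dvdn1; rewrite p2 in m_dvd.
  split=> [|F _]; last exact: subfield_dim1_eq.
  by apply/eqP; rewrite m1 eqn_leq adim_gt0 andbT -dimL1 dimvS ?subvf.
have n_gt0 : (0 < p.-1)%N by rewrite -subn1 subn_gt0 prime_gt1.
have [dimE uniqE] := @Wfield_dim_unique K p d
  (cyclotomic_splittingFieldType p_pr hzeta hL) zeta hp hd d_gt0 hzeta hL.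
rewrite (least_cong1_divisorE n_gt0 d_gt0 m_dvd m_cong m_min) in dimE.
by split=> // F dimF; apply: uniqE; rewrite dimF dimE.
Qed.
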